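(* Let $u>v\geq 1$ be integers. Then $$\langle u+v,u+v,u+v\rangle\;\leq\;\langle u,u,u\rangle+3\,\langle u,u,v\rangle+3\,\langle v,v,u\rangle .$$
   Context: Fix a field $\mathbb{K}$. For positive integers $a,b,c$, $\langle a,b,c\rangle$ denotes the minimal number of multiplications of a non-commutative bilinear algorithm computing the product of an $a\times b$ matrix $A$ by a $b\times c$ matrix $B$. Such an algorithm consists of $r$ products $t_k=\big(\sum_{i,j}\alpha^{(k)}_{ij}a_{ij}\big)\big(\sum_{j,l}\beta^{(k)}_{jl}b_{jl}\big)$ with $\alpha^{(k)}_{ij},\beta^{(k)}_{jl}\in\mathbb{K}$, together with scalars $\gamma^{(k)}_{il}\in\mathbb{K}$ such that $(AB)_{il}=\sum_{k=1}^r\gamma^{(k)}_{il}t_k$ for all $i,l$. This identity must hold when the entries of $A$ and $B$ are taken in an arbitrary, not necessarily commutative, associative $\mathbb{K}$-algebra. Equivalently, $\langle a,b,c\rangle$ is the tensor rank of the matrix multiplication tensor of format $(a,b,c)$. *)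

From mathcomp Require Import all_boot all_order all_algebra.
From mathcomp Require Import boolp.
Set Implicit Arguments. Unset Strict Implicit. Unset Printing Implicit Defensive.
Import GRing.Theory.
Local Open Scope ring_scope.

(* A non-commutative bilinear algorithm with r multiplications for the product
   of an a x b matrix A by a b x c matrix B over K:
     t_k = (sum_{i,j} al k i j * A_{ij}) (sum_{j',l} be k j' l * B_{j'l}),
     (AB)_{i'l'} = sum_k ga k i' l' * t_k.
   Since the entries of A and B lie in an arbitrary (free) non-commutative
   K-algebra, this holds iff, for all indices, the coefficient of the
   (ordered) monomial A_{ij} B_{j'l} in sum_k ga k i' l' * t_k equals that in
   (AB)_{i'l'} = sum_j A_{i'j} B_{jl'}, i.e. [i = i'][j = j'][l = l']. *)
Definition is_mm_alg (K : fieldType) (a b c r : nat)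
  (al : 'I_r -> 'M[K]_(a, b)) (be : 'I_r -> 'M[K]_(b, c))
  (ga : 'I_r -> 'M[K]_(a, c)) : Prop :=
  forall (i : 'I_a) (j j' : 'I_b) (l : 'I_c) (i' : 'I_a) (l' : 'I_c),
    \sum_(k < r) ga k i' l' * (al k i j * be k j' l)
    = ((i == i') && (j == j') && (l == l'))%:R.

Definition mm_alg_exists (K : fieldType) (a b c r : nat) : Prop :=
  exists al be ga, @is_mm_alg K a b c r al be ga.

Lemma mm_alg_exists_trivial (K : fieldType) (a b c : nat) :
  exists r, @mm_alg_exists K a b c r.
Proof.
pose T : finType := ('I_a * 'I_b * 'I_c)%type.
exists #|T|.
pose e (k : 'I_#|T|) : T := enum_val k.
exists (fun k => \matrix_(i, j) (((i == (e k).1.1) && (j == (e k).1.2))%:R : K)).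
exists (fun k => \matrix_(j, l) (((j == (e k).1.2) && (l == (e k).2))%:R : K)).
exists (fun k => \matrix_(i, l) (((i == (e k).1.1) && (l == (e k).2))%:R : K)).
move=> i j j' l i' l'.
have eK t : e (enum_rank t) = t by exact: enum_rankK.
rewrite (reindex (@enum_rank T)) /=; last first.
  by exists (@enum_val T predT) => x _; [exact: enum_rankK | exact: enum_valK].
rewrite (bigD1 (i, j, l)) //= big1 ?addr0.
  rewrite !eK !mxE /= !eqxx /=.
  rewrite mul1r andbT (eq_sym i) (eq_sym j) (eq_sym l).
  by case: (i' == i); case: (j' == j); case: (l' == l); rewrite /= ?(mulr0, mul0r, mulr1).
move=> [[x y] z] /= Hne; rewrite !eK !mxE /=.
case: (i =P x) => [Hx|_]; last by rewrite !(mul0r, mulr0, andbF, andFb).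
case: (j =P y) => [Hy|_]; last by rewrite !(mul0r, mulr0, andbF, andFb).
case: (l =P z) => [Hz|_]; last by rewrite !(mul0r, mulr0, andbF, andFb).
by subst; rewrite eqxx in Hne.
Qed.

Lemma mm_alg_exists_trivialb (K : fieldType) (a b c : nat) :
  exists r, `[< @mm_alg_exists K a b c r >].
Proof.
by have [r Hr] := mm_alg_exists_trivial K a b c; exists r; apply/asboolP.
Qed.

Definition mm_rank (K : fieldType) (a b c : nat) : nat :=
  ex_minn (@mm_alg_exists_trivialb K a b c).

(* Write [u = v + w] and cut [(u + v) x (u + v)] matrices into blocks of sizes
   [u] and [v], a [v]-block being identified with the zero-padded top-left
   corner of a [u]-block. Then [A *m B = \sum_k R_k (P_k A *m Q_k B)] for seven
   linear maps [P_k], [Q_k], [R_k]: one product of format <u,u,u>, three whose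
   formats are the cyclic rotations of <u,u,v> and three rotations of
   <v,v,u>. Rotating the format of an algorithm preserves its length (the
   matrix multiplication tensor is cyclically symmetric), and algorithms
   compose with linear maps and add up, so optimal algorithms for the seven
   products give one for <u+v,u+v,u+v>. *)

From HB Require Import structures.
From mathcomp Require Import all_boot all_algebra.
From mathcomp Require Import boolp ring zify.
Set Implicit Arguments. Unset Strict Implicit. Unset Printing Implicit Defensive.
Import GRing.Theory.
Local Open Scope ring_scope.

Section BilinearAlgorithms.
Variable K : fieldType.

Lemma mm_rank_alg a b c : mm_alg_exists K a b c (mm_rank K a b c).
Proof. by rewrite /mm_rank; case: ex_minnP => r /asboolP. Qed.

Lemma mm_rank_min a b c r : mm_alg_exists K a b c r -> (mm_rank K a b c <= r)%N.
Proof. by move=> alg; rewrite /mm_rank; case: ex_minnP => r' _; apply; apply/asboolP. Qed.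

Lemma mm_alg_cycle a b c r : mm_alg_exists K a b c r -> mm_alg_exists K c a b r.
Proof.
case=> al [be [ga alg]]; exists (fun k => (ga k)^T), al, (fun k => (be k)^T).
move=> i j j' l i' l'.
have -> : (i == i') && (j == j') && (l == l') = (j' == j) && (l == l') && (i' == i).
  by rewrite (eq_sym i) (eq_sym j); case: (i' == i); case: (j' == j); case: (l == l').
by rewrite -alg; apply: eq_bigr => k _; rewrite !mxE; ring.
Qed.

(* The linear forms are arbitrary functions here: evaluating them on the
   matrix units recovers a genuine bilinear algorithm (see [bilin_alg_mm]). *)
Definition bilin_alg_exists m1 n1 m2 n2 m n r
    (f : 'M[K]_(m1, n1) -> 'M[K]_(m2, n2) -> 'M[K]_(m, n)) :=
  exists (al : 'I_r -> 'M_(m1, n1) -> K) (be : 'I_r -> 'M_(m2, n2) -> K)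
         (ga : 'I_r -> 'M_(m, n)),
    forall X Y, f X Y = \sum_(k < r) (al k X * be k Y) *: ga k.

Lemma bilin_alg_add m1 n1 m2 n2 m n r1 r2
    (f g : 'M_(m1, n1) -> 'M_(m2, n2) -> 'M_(m, n)) :
  bilin_alg_exists r1 f -> bilin_alg_exists r2 g ->
  bilin_alg_exists (r1 + r2) (fun X Y => f X Y + g X Y).
Proof.
case=> [al1 [be1 [ga1 f_alg]]] [al2 [be2 [ga2 g_alg]]].
pose glue T (x1 : 'I_r1 -> T) (x2 : 'I_r2 -> T) k :=
  match split k with inl k1 => x1 k1 | inr k2 => x2 k2 end.
exists (glue _ al1 al2), (glue _ be1 be2), (glue _ ga1 ga2) => X Y.
by rewrite big_split_ord f_alg g_alg /glue; congr (_ + _); apply: eq_bigr => k _;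
  rewrite (unsplitK (inl k), unsplitK (inr k)).
Qed.

Lemma bilin_alg_comp m1 n1 m2 n2 m n p1 q1 p2 q2 p q r
    (f : 'M_(p1, q1) -> 'M_(p2, q2) -> 'M_(p, q))
    (P : 'M[K]_(m1, n1) -> 'M_(p1, q1)) (Q : 'M[K]_(m2, n2) -> 'M_(p2, q2))
    (R : 'M_(p, q) -> 'M[K]_(m, n)) :
  linear R -> bilin_alg_exists r f ->
  bilin_alg_exists r (fun X Y => R (f (P X) (Q Y))).
Proof.
move=> linR [al [be [ga f_alg]]].
pose RL : {linear 'M_(p, q) -> 'M_(m, n)} :=
  HB.pack R (GRing.isLinear.Build K _ _ *:%R R linR).
exists (fun k X => al k (P X)), (fun k Y => be k (Q Y)), (fun k => R (ga k)) => X Y.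
by rewrite f_alg -[R]/(RL : _ -> _) linear_sum; apply: eq_bigr => k _; rewrite linearZ.
Qed.

Lemma sum_mul_eq (I : finType) (F : I -> K) (j : I) : \sum_i F i * (i == j)%:R = F j.
Proof. by rewrite (bigD1 j) //= eqxx mulr1 big1 ?addr0 // => i /negbTE->; rewrite mulr0. Qed.

Lemma mulmx_coefE a b c (X : 'M[K]_(a, b)) (Y : 'M[K]_(b, c)) i' l' :
  (X *m Y) i' l' = \sum_i \sum_j \sum_j' \sum_l
                     X i j * Y j' l * ((i == i') && (j == j') && (l == l'))%:R.
Proof.
rewrite mxE exchange_big; apply: eq_bigr => j _ /=; symmetry.
under eq_bigr => i _ do under eq_bigr => j' _ do
  (under eq_bigr => l _ do rewrite -!mulnb !natrM !mulrA;
   rewrite sum_mul_eq (eq_sym j)).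
by under eq_bigr => i _ do rewrite sum_mul_eq; rewrite sum_mul_eq.
Qed.

Lemma mm_alg_bilin a b c r :
  mm_alg_exists K a b c r -> bilin_alg_exists r (@mulmx K a b c).
Proof.
case=> al [be [ga alg]].
exists (fun k X => \sum_i \sum_j X i j * al k i j).
exists (fun k Y => \sum_j \sum_l Y j l * be k j l).
exists ga => X Y; apply/matrixP => i' l'; rewrite mulmx_coefE summxE.
under eq_bigr => i _ do under eq_bigr => j _ do under eq_bigr => j' _ do
  under eq_bigr => l _ do rewrite -alg big_distrr.
under eq_bigr => i _ do under eq_bigr => j _ do under eq_bigr => j' _ do
  rewrite exchange_big.
under eq_bigr => i _ do under eq_bigr => j _ do rewrite exchange_big.
under eq_bigr => i _ do rewrite exchange_big.
rewrite exchange_big; apply: eq_bigr => k _.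
rewrite mxE !big_distrl; apply: eq_bigr => i _.
rewrite !big_distrl; apply: eq_bigr => j _.
rewrite big_distrr big_distrl; apply: eq_bigr => j' _.
by rewrite big_distrr big_distrl; apply: eq_bigr => l _ /=; ring.
Qed.

Lemma bilin_alg_mm a b c r :
  bilin_alg_exists r (@mulmx K a b c) -> mm_alg_exists K a b c r.
Proof.
case=> al [be [ga mul_alg]].
exists (fun k => \matrix_(i, j) al k (delta_mx i j)).
exists (fun k => \matrix_(j, l) be k (delta_mx j l)).
exists ga => i j j' l i' l'.
move/matrixP/(_ i' l'): (mul_alg (delta_mx i j) (delta_mx j' l)).
rewrite mul_delta_mx_cond mulmxnE mxE summxE (eq_sym i) (eq_sym l).
rewrite -mulrnA mulnb andbAC => ->.
by apply: eq_bigr => k _; rewrite !mxE mulrC.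
Qed.

Lemma mm_alg_comp m1 n1 m2 n2 m n p q t r
    (P : 'M[K]_(m1, n1) -> 'M_(p, q)) (Q : 'M[K]_(m2, n2) -> 'M_(q, t))
    (R : 'M_(p, t) -> 'M[K]_(m, n)) :
  linear R -> mm_alg_exists K p q t r ->
  bilin_alg_exists r (fun X Y => R (P X *m Q Y)).
Proof. by move=> linR /mm_alg_bilin; apply: bilin_alg_comp. Qed.

End BilinearAlgorithms.

Section BlockScheme.
Variables (K : fieldType) (v w : nat).
Local Notation u := (v + w).
Local Notation M := 'M[K]_(u + v).

Definition P1 (A : M) : 'M[K]_u := ulsubmx A + block_mx (drsubmx A) 0 0 0.
Definition R1 (X : 'M[K]_u) : M := block_mx X 0 0 (ulsubmx X).
Definition P2 (A : M) : 'M[K]_(v, u) := dlsubmx A + row_mx (drsubmx A) 0.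
Definition Q2 (B : M) : 'M[K]_u := ulsubmx B.
Definition R2 (X : 'M[K]_(v, u)) : M := block_mx 0 0 X (- lsubmx X).
Definition P3 (A : M) : 'M[K]_u := ulsubmx A.
Definition Q3 (B : M) : 'M[K]_(u, v) := ursubmx B - col_mx (drsubmx B) 0.
Definition R3 (X : 'M[K]_(u, v)) : M := block_mx 0 X 0 (usubmx X).
Definition P4 (A : M) : 'M[K]_v := drsubmx A.
Definition Q4 (B : M) : 'M[K]_(v, u) := dlsubmx B - usubmx (ulsubmx B).
Definition R4 (X : 'M[K]_(v, u)) : M := block_mx (col_mx X 0) 0 X 0.
Definition P5 (A : M) : 'M[K]_(u, v) := lsubmx (ulsubmx A) + ursubmx A.
Definition Q5 (B : M) : 'M[K]_v := drsubmx B.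
Definition R5 (X : 'M[K]_(u, v)) : M := block_mx (- row_mx X 0) X 0 0.
Definition P6 (A : M) : 'M[K]_(v, u) := dlsubmx A - usubmx (ulsubmx A).
Definition Q6 (B : M) : 'M[K]_(u, v) := lsubmx (ulsubmx B) + ursubmx B.
Definition R6 (X : 'M[K]_v) : M := block_mx 0 0 0 X.
Definition P7 (A : M) : 'M[K]_(u, v) := ursubmx A - col_mx (drsubmx A) 0.
Definition Q7 (B : M) : 'M[K]_(v, u) := dlsubmx B + row_mx (drsubmx B) 0.
Definition R7 (X : 'M[K]_u) : M := block_mx X 0 0 0.

Lemma ulsubmx_linear m1 m2 n1 n2 : linear (@ulsubmx K m1 m2 n1 n2).
Proof. by move=> x X Y; apply/matrixP => i j; rewrite !mxE. Qed.

Lemma lsubmx_linear m n1 n2 : linear (@lsubmx K m n1 n2).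
Proof. by move=> x X Y; apply/matrixP => i j; rewrite !mxE. Qed.

Lemma usubmx_linear m1 m2 n : linear (@usubmx K m1 m2 n).
Proof. by move=> x X Y; apply/matrixP => i j; rewrite !mxE. Qed.

Ltac linear_blocks :=
  rewrite ?(ulsubmx_linear, lsubmx_linear, usubmx_linear, scale_block_mx,
    scale_row_mx, scale_col_mx, add_block_mx, add_row_mx, add_col_mx,
    opp_row_mx, scaler0, scalerN, addr0, oppr0, opprD).

Lemma R1_linear : linear R1.
Proof. by move=> x X Y; rewrite /R1; linear_blocks. Qed.

Lemma R2_linear : linear R2.
Proof. by move=> x X Y; rewrite /R2; linear_blocks. Qed.

Lemma R3_linear : linear R3.
Proof. by move=> x X Y; rewrite /R3; linear_blocks. Qed.

Lemma R4_linear : linear R4.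
Proof. by move=> x X Y; rewrite /R4; linear_blocks. Qed.

Lemma R5_linear : linear R5.
Proof. by move=> x X Y; rewrite /R5; linear_blocks. Qed.

Lemma R6_linear : linear R6.
Proof. by move=> x X Y; rewrite /R6; linear_blocks. Qed.

Lemma R7_linear : linear R7.
Proof. by move=> x X Y; rewrite /R7; linear_blocks. Qed.

Definition scheme_mul (A B : M) : M :=
  R1 (P1 A *m P1 B) + R2 (P2 A *m Q2 B) + R3 (P3 A *m Q3 B) + R4 (P4 A *m Q4 B)
  + R5 (P5 A *m Q5 B) + R6 (P6 A *m Q6 B) + R7 (P7 A *m Q7 B).

Lemma lsubmx_block m1 m2 n1 n2 (Aul : 'M[K]_(m1, n1)) (Aur : 'M_(m1, n2))
    Adl (Adr : 'M_(m2, n2)) :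
  lsubmx (block_mx Aul Aur Adl Adr) = col_mx Aul Adl.
Proof. by rewrite block_mxEh row_mxKl. Qed.

Lemma usubmx_block m1 m2 n1 n2 (Aul : 'M[K]_(m1, n1)) (Aur : 'M_(m1, n2))
    Adl (Adr : 'M_(m2, n2)) :
  usubmx (block_mx Aul Aur Adl Adr) = row_mx Aul Aur.
Proof. by rewrite block_mxEv col_mxKu. Qed.

Lemma row_col_mx m1 m2 n1 n2 (Aul : 'M[K]_(m1, n1)) (Aur : 'M_(m1, n2))
    Adl (Adr : 'M_(m2, n2)) :
  row_mx (col_mx Aul Adl) (col_mx Aur Adr) = block_mx Aul Aur Adl Adr.
Proof. by rewrite block_mxEh. Qed.

Lemma col_row_mx m1 m2 n1 n2 (Aul : 'M[K]_(m1, n1)) (Aur : 'M_(m1, n2))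
    Adl (Adr : 'M_(m2, n2)) :
  col_mx (row_mx Aul Aur) (row_mx Adl Adr) = block_mx Aul Aur Adl Adr.
Proof. by rewrite block_mxEv. Qed.

Lemma row_col_mx0 m1 m2 n1 n2 (A1 : 'M[K]_(m1, n1)) (A2 : 'M_(m2, n1)) :
  row_mx (col_mx A1 A2) (0 : 'M_(m1 + m2, n2)) = block_mx A1 0 A2 0.
Proof. by rewrite -col_mx0 row_col_mx. Qed.

Lemma col_row_mx0 m1 m2 n1 n2 (A1 : 'M[K]_(m1, n1)) (A2 : 'M_(m1, n2)) :
  col_mx (row_mx A1 A2) (0 : 'M_(m2, n1 + n2)) = block_mx A1 A2 0 0.
Proof. by rewrite -row_mx0 col_row_mx. Qed.

Ltac extract_blocks := rewrite ?(block_mxKul, block_mxKur, block_mxKdl, block_mxKdr,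
  row_mxKl, row_mxKr, col_mxKu, col_mxKd, lsubmx_block, usubmx_block).

Ltac merge_blocks := rewrite ?(add_block_mx, add_row_mx, add_col_mx, opp_block_mx,
  opp_row_mx, opp_col_mx, addr0, add0r, oppr0, subr0, sub0r).

Ltac multiply_blocks := rewrite ?(mulmx_block, mul_row_block, mul_block_col,
  mul_row_col, mul_col_row, mul_mx_row, mul_col_mx, mul0mx, mulmx0).

Ltac reshape_blocks := rewrite ?(row_col_mx0, col_row_mx0, row_col_mx, col_row_mx,
  row_mx0, col_mx0).

Lemma scheme_mulE (A B : M) : scheme_mul A B = A *m B.
Proof.
rewrite -[A]submxK -[ulsubmx A]submxK -[ursubmx A]vsubmxK -[dlsubmx A]hsubmxK.
rewrite -[B]submxK -[ulsubmx B]submxK -[ursubmx B]vsubmxK -[dlsubmx B]hsubmxK.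
rewrite /scheme_mul /R1 /P1 /R2 /P2 /Q2 /R3 /P3 /Q3 /R4 /P4 /Q4 /R5 /P5 /Q5.
rewrite /R6 /P6 /Q6 /R7 /P7 /Q7.
extract_blocks; merge_blocks; multiply_blocks; extract_blocks; merge_blocks.
reshape_blocks; merge_blocks; rewrite ?(mulmxDl, mulmxDr, mulmxN, mulNmx).
(* With the block products abstracted, each block is an abelian group identity. *)
congr (block_mx (block_mx _ _ _ _) (col_mx _ _) (row_mx _ _) _);
  repeat match goal with |- context [?x *m ?y] =>
    let p := fresh "p" in set p := x *m y; clearbody p end;
  by apply/matrixP => i j; rewrite !mxE; ring.
Qed.

Lemma scheme_bilin_alg r1 r2 r3 r4 r5 r6 r7 :
  bilin_alg_exists r1 (fun A B => R1 (P1 A *m P1 B)) ->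
  bilin_alg_exists r2 (fun A B => R2 (P2 A *m Q2 B)) ->
  bilin_alg_exists r3 (fun A B => R3 (P3 A *m Q3 B)) ->
  bilin_alg_exists r4 (fun A B => R4 (P4 A *m Q4 B)) ->
  bilin_alg_exists r5 (fun A B => R5 (P5 A *m Q5 B)) ->
  bilin_alg_exists r6 (fun A B => R6 (P6 A *m Q6 B)) ->
  bilin_alg_exists r7 (fun A B => R7 (P7 A *m Q7 B)) ->
  bilin_alg_exists (r1 + r2 + r3 + r4 + r5 + r6 + r7) (@mulmx K (u + v) (u + v) (u + v)).
Proof.
move=> h1 h2 h3 h4 h5 h6 h7.
have := bilin_alg_add (bilin_alg_add (bilin_alg_add (bilin_alg_add
          (bilin_alg_add (bilin_alg_add h1 h2) h3) h4) h5) h6) h7.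
suff -> : (fun A B => scheme_mul A B) = @mulmx K _ _ _ by [].
by apply/funext => A; apply/funext => B; apply: scheme_mulE.
Qed.

End BlockScheme.

Theorem proposition1 (K : fieldType) (u v : nat) :
  (1 <= v)%N -> (v < u)%N ->
  (mm_rank K (u + v) (u + v) (u + v)
   <= mm_rank K u u u + 3 * mm_rank K u u v + 3 * mm_rank K v v u)%N.
Proof.
move=> _ /ltnW le_vu; rewrite -(subnKC le_vu); move: (u - v)%N => w.
have alg_uuu := mm_rank_alg K (v + w) (v + w) (v + w).
have alg_uuv := mm_rank_alg K (v + w) (v + w) v.
have alg_vvu := mm_rank_alg K v v (v + w).
set c1 := mm_rank K (v + w) (v + w) (v + w) in alg_uuu *.
set c2 := mm_rank K (v + w) (v + w) v in alg_uuv *.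
set c3 := mm_rank K v v (v + w) in alg_vvu *.
have -> : (c1 + 3 * c2 + 3 * c3 = c1 + c2 + c2 + c3 + c3 + c3 + c2)%N by lia.
apply/mm_rank_min/bilin_alg_mm/scheme_bilin_alg.
- exact: mm_alg_comp (@R1_linear K v w) alg_uuu.
- exact: mm_alg_comp (@R2_linear K v w) (mm_alg_cycle alg_uuv).
- exact: mm_alg_comp (@R3_linear K v w) alg_uuv.
- exact: mm_alg_comp (@R4_linear K v w) alg_vvu.
- exact: mm_alg_comp (@R5_linear K v w) (mm_alg_cycle alg_vvu).
- exact: mm_alg_comp (@R6_linear K v w) (mm_alg_cycle (mm_alg_cycle alg_vvu)).
- exact: mm_alg_comp (@R7_linear K v w) (mm_alg_cycle (mm_alg_cycle alg_uuv)).
Qed.
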